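(* Let $i$ be a positive integer and $\mathcal A$ an alphabet. Let $\mathcal B$ be the Butterfly Network and let $\mathbf A_{\mathcal B}$ be an adversary able to attack up to one edge of $\mathcal U=\{e_1,e_2,e_3,e_4,e_6,e_7,e_9\}$ in each round, possibly a different one in each round (Scenario A.2). Then the $i$-shot capacity of $\mathcal B$ is \[C_i(\mathcal B,\mathcal A,\mathbf A_{\mathcal B})=\log_{|\mathcal A|}(|\mathcal A|-1).\]
   Context: An alphabet is a finite set $\mathcal A$ with $|\mathcal A|\ge2$. The Butterfly Network $\mathcal B$ has source $S$, intermediate nodes $V_1,V_2,V_3,V_4$, terminals $T_1,T_2$, and edges $e_1,e_2:S\to V_1$; $e_3,e_4:S\to V_2$; $e_5:V_1\to T_1$; $e_6:V_1\to V_3$; $e_7:V_2\to V_3$; $e_8:V_2\to T_2$; $e_9:V_3\to V_4$; $e_{10}:V_4\to T_1$; $e_{11}:V_4\to T_2$. Each edge carries one symbol of $\mathcal A$. A network code assigns to each $V_j$ a function from the symbols on its incoming edges to the symbols on its outgoing edges. In one use, $S$ sends $x\in\mathcal A^4$ on $e_1,\dots,e_4$, the adversary may replace the symbol on at most one edge of $\mathcal U$ by an arbitrary symbol, and values propagate; $\Omega_k(x)$ is the set of vectors terminal $T_k$ can receive. For $i$ uses with the same network code (Scenario A.2), the fan-out set at $T_k$ of $(x^1,\dots,x^i)$ is $\Omega_k(x^1)\times\dots\times\Omega_k(x^i)$. A nonempty code $C\subseteq(\mathcal A^4)^i$ is unambiguous if, for each of $T_1,T_2$, distinct codewords have disjoint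 fan-out sets; $C_i$ is the maximum of $\log_{|\mathcal A|}(|C|)/i$ over network codes and unambiguous codes. *)

From Stdlib Require Import Reals.
From mathcomp Require Import all_boot.

Set Implicit Arguments.
Unset Strict Implicit.
Unset Printing Implicit Defensive.

Section Butterfly.
Variable A : finType.

(* V1 : (e1,e2) -> (e5,e6);  V2 : (e3,e4) -> (e7,e8);
   V3 : (e6,e7) -> e9;       V4 : e9 -> (e10,e11). *)
Record netcode := NetCode {
  nodeV1 : A * A -> A * A;
  nodeV2 : A * A -> A * A;
  nodeV3 : A * A -> A;
  nodeV4 : A -> A * A }.

Inductive uedge := E1 | E2 | E3 | E4 | E6 | E7 | E9.
Scheme Equality for uedge.

Definition attack := option (uedge * A).

Definition tamper (att : attack) (e : uedge) (s : A) : A :=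
  match att with
  | Some (e', a) => if uedge_beq e' e then a else s
  | None => s
  end.

Inductive terminal := T1 | T2.

Definition received (F : netcode) (att : attack) (x : A * A * A * A) (k : terminal)
  : A * A :=
  let '(x1, x2, x3, x4) := x in
  let s1 := tamper att E1 x1 in
  let s2 := tamper att E2 x2 in
  let s3 := tamper att E3 x3 in
  let s4 := tamper att E4 x4 in
  let '(y5, y6) := nodeV1 F (s1, s2) in
  let '(y7, y8) := nodeV2 F (s3, s4) in
  let s6 := tamper att E6 y6 in
  let s7 := tamper att E7 y7 in
  let y9 := nodeV3 F (s6, s7) in
  let s9 := tamper att E9 y9 in
  let '(y10, y11) := nodeV4 F s9 in
  match k with
  | T1 => (y5, y10)
  | T2 => (y8, y11)
  end.

Definition Omega (F : netcode) (k : terminal) (x : A * A * A * A) (y : A * A) : Prop :=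
  exists att : attack, received F att x k = y.

(* Fan-out set of a codeword (x^1,...,x^i) at T_k (Scenario A.2):
   Omega_k(x^1) x ... x Omega_k(x^i). *)
Definition fanout (i : nat) (F : netcode) (k : terminal)
  (c : {ffun 'I_i -> A * A * A * A}) (y : 'I_i -> A * A) : Prop :=
  forall j : 'I_i, Omega F k (c j) (y j).

Definition unambiguous (i : nat) (F : netcode) (C : {set {ffun 'I_i -> A * A * A * A}})
  : Prop :=
  C != set0 /\
  forall k : terminal, forall c c', c \in C -> c' \in C -> c <> c' ->
    forall y, ~ (fanout F k c y /\ fanout F k c' y).

Definition rate (i : nat) (C : {set {ffun 'I_i -> A * A * A * A}}) : R :=
  Rdiv (Rdiv (ln (INR #|C|)) (ln (INR #|A|))) (INR i).

Definition is_capacity (i : nat) (v : R) : Prop :=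
  (exists F C, @unambiguous i F C /\ rate C = v) /\
  (forall F C, @unambiguous i F C -> Rle (rate C) v).

End Butterfly.

From Pilot Require Import Defs.
From Stdlib Require Import Reals Lra.
From mathcomp Require Import all_boot.

Set Implicit Arguments.
Unset Strict Implicit.
Unset Printing Implicit Defensive.

(* Terminal T1 receives the first output f(x1, x2) of V1, corrupted only by
   attacks on e1 or e2, together with a second symbol that an attack on e9 sets
   freely.  So two inputs are confusable at T1 as soon as f of one of them is
   the value of f at a pair differing from the other's (x1, x2) in at most one
   coordinate.  Call w pinned when f is constantly w on the "cross" of some
   pair; at most one symbol is pinned.  For an unpinned w, label each pair p by
   f p, or by some value other than w reachable from p when f p = w: equal
   labels give confusable inputs, so an unambiguous code injects into
   (A \ {w})^i.  Conversely, send (s, s, s, s) with s <> z, let V1 and V2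
   forward their input when both copies agree and the erasure z otherwise, and
   let V3 forward a non-erased input: a single corrupted edge never prevents a
   terminal from recovering s, which gives |A| - 1 codewords per use. *)

Section Counting.
Variable A : finType.

Lemma unambiguous_card_le (F : netcode A) (k : terminal) (i : nat)
    (C : {set {ffun 'I_i -> A * A * A * A}}) (label : A * A * A * A -> A) (w : A) :
  (forall x, label x != w) ->
  (forall x x', label x = label x' -> exists y, Omega F k x y /\ Omega F k x' y) ->
  unambiguous F C -> #|C| <= #|A|.-1 ^ i.
Proof.
move=> labelNw label_confusable [_ C_unamb].
pose encode (c : {ffun 'I_i -> A * A * A * A}) := [ffun j => label (c j)].
have encode_inj : {in C &, injective encode}.
  move=> c c' cC c'C /ffunP eq_enc; apply/eqP/negPn/negP => /eqP neq.
  have /fin_all_exists[y fy] : forall j, exists yj, Omega F k (c j) yj /\ Omega F k (c' j) yj.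
    by move=> j; apply: label_confusable; have := eq_enc j; rewrite !ffunE.
  by apply: (C_unamb k c c' cC c'C neq y); split=> j; case: (fy j).
have -> : #|A|.-1 ^ i = #|ffun_on (predC1 w) : {pred {ffun 'I_i -> A}}|.
  by rewrite card_ffun_on cardC1 card_ord.
rewrite -(card_in_imset encode_inj); apply/subset_leq_card/subsetP.
by move=> _ /imsetP[c _ ->]; apply/ffun_onP => j; rewrite ffunE inE labelNw.
Qed.

End Counting.

Section UpperBound.
Variables (A : finType) (F : netcode A).

Definition inV1 (x : A * A * A * A) : A * A := (x.1.1.1, x.1.1.2).

Definition out5 (p : A * A) : A := (nodeV1 F p).1.

(* [Defs.E1]: a bare [E1] would denote the exponential series of the Reals library. *)
Lemma received_T1 att x : exists b,
  received F att x T1 =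
  (out5 (tamper att Defs.E1 x.1.1.1, tamper att E2 x.1.1.2), (nodeV4 F b).1).
Proof.
case: x => [[[x1 x2] x3] x4]; rewrite /received /out5.
case: (nodeV1 F _) => y5 y6; case: (nodeV2 F _) => y7 y8.
by set b := tamper att E9 _; exists b; case: (nodeV4 F b).
Qed.

Lemma Omega_T1_E9 x b : Omega F T1 x (out5 (inV1 x), (nodeV4 F b).1).
Proof.
exists (Some (E9, b)); case: x => [[[x1 x2] x3] x4]; rewrite /received /out5 /=.
case: (nodeV1 F _) => y5 y6; case: (nodeV2 F _) => y7 y8 /=.
by case: (nodeV4 F b).
Qed.

Definition near (p q : A * A) : bool := (p.1 == q.1) || (p.2 == q.2).

Lemma near_refl p : near p p.
Proof. by rewrite /near eqxx. Qed.

Lemma Omega_T1_near x q :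
  near (inV1 x) q -> exists b, Omega F T1 x (out5 q, (nodeV4 F b).1).
Proof.
case: q => q1 q2; rewrite /near /= => near_xq.
pose att : attack A := if x.1.1.1 == q1 then Some (E2, q2) else Some (Defs.E1, q1).
have [b recv] := received_T1 att x; exists b, att; rewrite recv /att.
by case: eqP near_xq => [-> | _ /eqP ->].
Qed.

Definition reachable (p : A * A) (u : A) : bool :=
  [exists q, near p q && (out5 q == u)].

Lemma reachable_out5 p : reachable p (out5 p).
Proof. by apply/existsP; exists p; rewrite near_refl eqxx. Qed.

Lemma reachable_confusable x x' : reachable (inV1 x) (out5 (inV1 x')) ->
  exists y, Omega F T1 x y /\ Omega F T1 x' y.
Proof.
case/existsP=> q /andP[near_xq /eqP eq_q].
have [b Omega_xq] := Omega_T1_near near_xq.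
by exists (out5 q, (nodeV4 F b).1); rewrite {2}eq_q; split=> //; apply: Omega_T1_E9.
Qed.

Definition pinned (w : A) : bool :=
  [exists p, [forall q, near p q ==> (out5 q == w)]].

Lemma pinned_inj w v : pinned w -> pinned v -> w = v.
Proof.
move=> /existsP[p /forallP pw] /existsP[p' /forallP p'v].
have := pw (p.1, p'.2); have := p'v (p.1, p'.2).
by rewrite /near !eqxx orbT => /eqP -> /eqP.
Qed.

Lemma exists_unpinned : 1 < #|A| -> exists w, ~~ pinned w.
Proof.
case/card_gt1P=> [a [b [_ _ aNb]]].
have [pinned_a|] := boolP (pinned a); last by exists a.
exists b; apply: contra aNb => pinned_b.
by rewrite (pinned_inj pinned_a pinned_b).
Qed.

Definition label (w : A) (p : A * A) : A :=
  if out5 p != w then out5 p else odflt w [pick u | (u != w) && reachable p u].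

Lemma label_neq w p : ~~ pinned w -> label w p != w.
Proof.
move=> unpinned; rewrite /label; case: ifP => // /negbFE /eqP out5_p.
case: pickP => [u /andP[] | no_escape] //.
case/negP: unpinned; apply/existsP; exists p; apply/forallP => q.
apply/implyP => near_pq; apply/negPn/negP => out5_q.
have := no_escape (out5 q); rewrite out5_q /=.
by move/negbT/negP; apply; apply/existsP; exists q; rewrite near_pq eqxx.
Qed.

Lemma label_eq_reachable w p p' : ~~ pinned w -> label w p = label w p' ->
  reachable p (out5 p') || reachable p' (out5 p).
Proof.
move=> unpinned eq_label.
have := label_neq p unpinned; have := label_neq p' unpinned; move: eq_label.
rewrite /label; case: ifP => [_|/negbFE/eqP out5_p]; case: ifP => [_|/negbFE/eqP out5_p'].
- by move=> -> _ _; rewrite reachable_out5 orbT.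
- case: pickP => [u /andP[_ reach_u] /= -> _ _ | _ _ /eqP //].
  by rewrite reach_u orbT.
- case: pickP => [u /andP[_ reach_u] /= <- _ _ | _ <- /eqP //].
  by rewrite reach_u.
- by rewrite out5_p' -out5_p reachable_out5.
Qed.

Lemma label_eq_confusable w x x' : ~~ pinned w ->
  label w (inV1 x) = label w (inV1 x') ->
  exists y, Omega F T1 x y /\ Omega F T1 x' y.
Proof.
move=> unpinned /(label_eq_reachable unpinned) /orP[] /reachable_confusable //.
by case=> y [Omega_x' Omega_x]; exists y.
Qed.

End UpperBound.

Section RepetitionCode.
Variable A : finType.

Definition repeat4 (s : A) : A * A * A * A := (s, s, s, s).

Definition repetition_code (i : nat) (S : {pred A}) : {set {ffun 'I_i -> A * A * A * A}} :=
  [set [ffun j => repeat4 (g j)] | g : {ffun 'I_i -> A} in ffun_on S].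

Lemma card_repetition_code i S : #|repetition_code i S| = #|S| ^ i.
Proof.
rewrite card_in_imset ?card_ffun_on ?card_ord // => g g' _ _ /ffunP eq_gg'.
by apply/ffunP => j; have := eq_gg' j; rewrite !ffunE => -[].
Qed.

Lemma repetition_code_unambiguous (F : netcode A) i (S : {pred A}) (decode : A * A -> A) :
  0 < #|S| ->
  (forall att k s, s \in S -> decode (received F att (repeat4 s) k) = s) ->
  unambiguous F (repetition_code i S).
Proof.
move=> S_gt0 decodeK; split.
  by rewrite -card_gt0 card_repetition_code expn_gt0 S_gt0.
move=> k _ _ /imsetP[g /ffun_onP gS ->] /imsetP[g' /ffun_onP g'S ->] neq y [fy fy'].
suff eq_gg' : g = g' by rewrite eq_gg' in neq.
apply/ffunP => j; have [[att eq_y] [att' eq_y']] := (fy j, fy' j).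
rewrite !ffunE in eq_y eq_y'.
by rewrite -(decodeK att k _ (gS j)) -(decodeK att' k _ (g'S j)) eq_y eq_y'.
Qed.

Variable z : A.

Definition agree (p : A * A) : A := if p.1 == p.2 then p.1 else z.

Definition repetition_netcode : netcode A :=
  NetCode (fun p => (agree p, agree p)) (fun p => (agree p, agree p))
          (fun p => if p.1 == z then p.2 else p.1) (fun s => (s, s)).

Definition unerase (y : A * A) : A := if y.1 == z then y.2 else y.1.

Lemma unerase_received att k s : s != z ->
  unerase (received repetition_netcode att (repeat4 s) k) = s.
Proof.
move=> /negbTE sNz; rewrite /unerase.
case: k; case: att => [[[] a]|]; rewrite /= /agree /= ?eqxx ?sNz //.
all: try case: (a =P s) => [->|aNs]; rewrite ?eqxx ?sNz //.
all: by rewrite (introF eqP (nesym aNs)) eqxx.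
Qed.

End RepetitionCode.

Section LogRates.
Local Open Scope R_scope.

Lemma INR_expn m n : INR (m ^ n)%N = INR m ^ n.
Proof. by elim: n => [|n IH] //=; rewrite expnS -multE mult_INR IH. Qed.

Lemma ln_INR_gt0 q : (1 < q)%N -> 0 < ln (INR q).
Proof. by move=> q_gt1; rewrite -ln_1; apply: ln_increasing; [lra | apply/lt_1_INR/ltP]. Qed.

Lemma log_rate_pow q m i : (0 < i)%N -> (0 < m)%N -> (1 < q)%N ->
  ln (INR (m ^ i)%N) / ln (INR q) / INR i = ln (INR m) / ln (INR q).
Proof.
move=> i_gt0 m_gt0 q_gt1.
have ln_q_gt0 := ln_INR_gt0 q_gt1.
have i_neq0 : INR i <> 0 by apply: not_0_INR; apply/eqP; rewrite -lt0n.
rewrite INR_expn ln_pow; last by apply/lt_0_INR/ltP.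
by field; split; [lra|].
Qed.

Lemma log_rate_le q m i n : (0 < i)%N -> (0 < n)%N -> (n <= m ^ i)%N -> (1 < q)%N ->
  ln (INR n) / ln (INR q) / INR i <= ln (INR m) / ln (INR q).
Proof.
move=> i_gt0 n_gt0 n_le q_gt1.
have m_gt0 : (0 < m)%N.
  by rewrite lt0n; apply: contraTneq (leq_trans n_gt0 n_le) => ->; rewrite exp0n.
rewrite -(log_rate_pow i_gt0 m_gt0 q_gt1).
have ln_le : ln (INR n) <= ln (INR (m ^ i)%N).
  have /Rle_lt_or_eq_dec[lt|->] : INR n <= INR (m ^ i)%N by apply/le_INR/leP.
    by left; apply: ln_increasing => //; apply/lt_0_INR/ltP.
  by right.
apply: Rmult_le_compat_r; first by left; apply/Rinv_0_lt_compat/lt_0_INR/ltP.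
by apply: Rmult_le_compat_r => //; left; apply/Rinv_0_lt_compat/ln_INR_gt0.
Qed.

End LogRates.

Theorem proposition5p8 (A : finType) (i : nat) :
  0 < i -> 1 < #|A| ->
  is_capacity A i (Rdiv (ln (INR (#|A| - 1))) (ln (INR #|A|))).
Proof.
move=> i_gt0 A_gt1.
have /card_gt0P[z _] : 0 < #|A| by apply: ltn_trans A_gt1.
have S_gt0 : 0 < #|predC1 z| by rewrite cardC1 -subn1 subn_gt0.
split.
  exists (repetition_netcode z), (repetition_code i (predC1 z)); split.
    by apply: (repetition_code_unambiguous _ S_gt0) => att k s; apply: unerase_received.
  by rewrite /rate card_repetition_code cardC1 subn1 log_rate_pow // -subn1 subn_gt0.
move=> F C C_unamb.
have [w unpinned] := exists_unpinned F A_gt1.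
have C_le := unambiguous_card_le (label := fun x => label F w (inV1 x))
  (fun x => label_neq (inV1 x) unpinned)
  (fun x x' => @label_eq_confusable _ F w x x' unpinned) C_unamb.
have C_gt0 : 0 < #|C| by rewrite card_gt0; case: C_unamb.
by rewrite /rate subn1; apply: log_rate_le.
Qed.
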